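(* Fix an integer base $b\ge 2$ and $f_*:\{0,\dots,b-1\}\to\mathbb{Z}^{\ge 0}$ with $f_*(0)=0$, $f_*(1)=1$, $\gcd(b,f_*(b-1))=1$, and suppose there is a digit $0\le m_*\le b-1$ with $\gcd(f(m_* )-m_*,f(b-1))=1$, where $f$ is the digit map $f\left(\sum_i a_ib^i\right)=\sum_i f_*(a_i)$ (base-$b$ representation). Let $u$ be a positive integer with $f^r(u)=u$ for some $r\ge 1$. Let $h$ be a $u$-integer. Then for every integer $a$ there exists a $u$-integer $l$ such that $l\equiv a \pmod{f(b-1)}$ and such that $l$ and $h$ are concurrently $u$-integers.
   Context: $f^r$ is the $r$-fold iterate of $f$. A positive integer $n$ is a $u$-integer if $f^r(n)=u$ for some $r\ge1$. Two positive integers $m,n$ are concurrently $u$-integers if there is some $r\ge 1$ with $f^r(m)=f^r(n)=u$. *)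

From mathcomp Require Import all_boot all_order all_algebra.
Set Implicit Arguments. Unset Strict Implicit. Unset Printing Implicit Defensive.

(* Implemented by peeling off the last digit;
   the fuel argument k (initialised to n) suffices since n %/ b < n for b >= 2
   and n > 0.  digitmap b fs 0 = 0. *)
Fixpoint digitmap_rec (b : nat) (fs : nat -> nat) (k n : nat) : nat :=
  match k with
  | 0 => 0
  | k'.+1 => if n == 0 then 0 else fs (n %% b) + digitmap_rec b fs k' (n %/ b)
  end.

Definition digitmap (b : nat) (fs : nat -> nat) (n : nat) : nat :=
  digitmap_rec b fs n n.

Definition is_u_integer (f : nat -> nat) (u n : nat) : Prop :=
  0 < n /\ exists r, 1 <= r /\ iter r f n = u.

Definition concurrently_u (f : nat -> nat) (u m n : nat) : Prop :=
  0 < m /\ 0 < n /\ exists r, 1 <= r /\ iter r f m = u /\ iter r f n = u.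

From mathcomp Require Import all_boot all_order all_algebra.
From mathcomp Require Import cyclic zify ring.
Import GRing.Theory Num.Theory.

(* Let F := f(b-1) and T := f(h) b^e with e large, so that f(T) = f(f(h)):
   any l with f(l) = T has the same iterates as h from the second one on.
   Take for l the number with k digits m (the digit of the hypothesis) and
   T - k f(m) digits 1, spaced totient(F) places apart.  As b^totient(F) = 1
   mod F, l = k m + (T - k f(m)) = T - k (f(m) - m) mod F, and since f(m) - m
   is invertible mod F, a suitable k < F puts l in any residue class. *)

Lemma digitmap_rec_fuel b fs k1 k2 n : 1 < b -> n <= k1 -> n <= k2 ->
  digitmap_rec b fs k1 n = digitmap_rec b fs k2 n.
Proof.
move=> b_gt1; elim: k1 k2 n => [|k1 IHk] [|k2] n //=.
- by rewrite leqn0 => /eqP -> _.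
- by rewrite leqn0 => _ /eqP ->.
case: eqP => // /eqP n_neq0 le_nk1 le_nk2.
have lt_n : n %/ b < n by rewrite ltn_Pdiv // lt0n.
by congr (_ + _); apply: IHk; lia.
Qed.

Lemma digitmap_cons b fs d n : 1 < b -> fs 0 = 0 -> d < b ->
  digitmap b fs (d + b * n) = fs d + digitmap b fs n.
Proof.
move=> b_gt1 fs0 lt_db; case E: (d + b * n) => [|x].
  have d0 : d = 0 by lia.
  have n0 : n = 0 by nia.
  by rewrite d0 n0 fs0.
rewrite /digitmap /= -E.
have -> : (d + b * n) %% b = d by rewrite addnC mulnC modnMDl modn_small.
have -> : (d + b * n) %/ b = n.
  by rewrite addnC mulnC divnMDl ?divn_small ?addn0 //; lia.
by congr (_ + _); apply: digitmap_rec_fuel => //; nia.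
Qed.

Lemma digitmap_digit b fs d : 1 < b -> fs 0 = 0 -> d < b ->
  digitmap b fs d = fs d.
Proof.
move=> b_gt1 fs0 lt_db.
have := @digitmap_cons b fs d 0 b_gt1 fs0 lt_db.
by rewrite muln0 addn0 /= addn0.
Qed.

Lemma digitmap_mulXn b fs q x : 1 < b -> fs 0 = 0 ->
  digitmap b fs (b ^ q * x) = digitmap b fs x.
Proof.
move=> b_gt1 fs0; elim: q => [|q IHq]; first by rewrite mul1n.
by rewrite expnS -mulnA -[b * _]add0n digitmap_cons ?fs0 ?IHq //; lia.
Qed.

(* [digit_blocks b q d n x] has base-b expansion: the digits of x, followed
   by n blocks each consisting of q - 1 zeros and then the digit d. *)
Definition digit_blocks b q d n x := iter n (fun y => d + b ^ q * y) x.

Lemma digitmap_digit_blocks b fs q d n x :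
  1 < b -> fs 0 = 0 -> 0 < q -> d < b ->
  digitmap b fs (digit_blocks b q d n x) = n * fs d + digitmap b fs x.
Proof.
move=> b_gt1 fs0 q_gt0 lt_db; case: q q_gt0 => // q _.
elim: n => [|n IHn] //=.
by rewrite expnS -mulnA digitmap_cons // digitmap_mulXn // IHn mulSn addnA.
Qed.

Lemma digit_blocks_mod b q d n x F : b ^ q = 1 %[mod F] ->
  digit_blocks b q d n x = n * d + x %[mod F].
Proof.
move=> bq1; elim: n => [|n IHn] //=.
by rewrite -modnDmr -modnMml bq1 modnMml mul1n modnDmr -modnDmr IHn modnDmr
  mulSn addnA.
Qed.

Lemma modz_inverse_solve (F c D m T a k : int) :
  (c * (D - m) = 1 %[mod F])%Z -> (k = c * (T - a) %[mod F])%Z ->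
  (k * m + (T - k * D) = a %[mod F])%Z.
Proof.
move=> /eqP; rewrite eqz_mod_dvd => dvd_c /eqP; rewrite eqz_mod_dvd => dvd_k.
apply/eqP; rewrite eqz_mod_dvd.
have -> : (k * m + (T - k * D) - a =
           (a - T) * (c * (D - m) - 1) - (k - c * (T - a)) * (D - m))%R.
  by ring.
by apply: rpredB; [exact: dvdz_mull | exact: dvdz_mulr].
Qed.

Lemma digitmap_preimage_mod b fs m F T (a : int) :
  1 < b -> fs 0 = 0 -> fs 1 = 1 -> m < b -> coprime b F ->
  gcdz ((fs m)%:Z - m%:Z) F%:Z = 1 -> F * fs m <= T ->
  exists l, digitmap b fs l = T /\ (l%:Z = a %[mod F%:Z])%Z.
Proof.
move=> b_gt1 fs0 fs1 lt_mb coFb gcd1 le_T.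
have F_gt0 : 0 < F.
  by case: F coFb {gcd1 le_T} => //; rewrite /coprime gcdn0 => /eqP; lia.
have [c [v Bezout_c]] := Bezoutz ((fs m)%:Z - m%:Z) F%:Z.
have c_inv : (c * ((fs m)%:Z - m%:Z) = 1 %[mod F%:Z])%Z.
  by rewrite -(modzMDl v) addrC Bezout_c gcd1.
pose x := (c * (T%:Z - a) %% F%:Z)%Z.
have x_ge0 : (0 <= x)%R by rewrite modz_ge0 // eqz_nat -lt0n.
pose k := `|x|%N.
have kE : (k%:Z = x)%Z by rewrite gez0_abs.
have lt_kF : k < F by rewrite -ltz_nat kE ltz_pmod // ltz_nat.
have le_kT : k * fs m <= T.
  by apply: leq_trans le_T; rewrite leq_mul2r ltnW ?orbT.
pose q := totient F.
have q_gt0 : 0 < q by rewrite totient_gt0.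
have bq1 : b ^ q = 1 %[mod F] by apply: Euler_exp_totient.
pose l := digit_blocks b q m k (digit_blocks b q 1 (T - k * fs m) 0).
exists l; split.
  by rewrite !digitmap_digit_blocks // fs1 muln1 addn0 subnKC.
have l_mod : l = k * m + (T - k * fs m) %[mod F].
  rewrite digit_blocks_mod // -modnDmr digit_blocks_mod //.
  by rewrite modnDmr muln1 addn0.
rewrite modz_nat l_mod -modz_nat PoszD -subzn // !PoszM.
apply: (@modz_inverse_solve F c (fs m) m T a k c_inv).
by rewrite kE; exact: modz_mod.
Qed.

Lemma concurrently_u_iter2 (f : nat -> nat) u l h : 0 < l ->
  f (f l) = f (f h) -> (exists p, 1 <= p /\ iter p f u = u) ->
  is_u_integer f u h -> is_u_integer f u l /\ concurrently_u f u l h.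
Proof.
move=> l_gt0 ffE [p [p_gt0 fpu]] [h_gt0 [r [r_gt0 frh]]].
have [n pr_eq] : exists n, p + r = n.+2 by exists (p + r).-2; lia.
have fnh : iter n.+2 f h = u by rewrite -pr_eq iterD frh fpu.
have fnl : iter n.+2 f l = u by rewrite -fnh !iterSr ffE.
split; first by split=> //; exists n.+2.
by do 2!split=> //; exists n.+2.
Qed.

Theorem lemma2p3 (b : nat) (fs : nat -> nat) (mstar u h : nat) :
  2 <= b ->
  fs 0 = 0 -> fs 1 = 1 ->
  coprime b (fs b.-1) ->
  mstar <= b.-1 ->
  gcdz ((digitmap b fs mstar)%:Z - mstar%:Z) (digitmap b fs b.-1)%:Z = 1%Z ->
  0 < u -> (exists r, 1 <= r /\ iter r (digitmap b fs) u = u) ->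
  is_u_integer (digitmap b fs) u h ->
  forall a : int, exists l : nat,
    is_u_integer (digitmap b fs) u l /\
    (l%:Z = a %[mod (digitmap b fs b.-1)%:Z])%Z /\
    concurrently_u (digitmap b fs) u l h.
Proof.
move=> b_gt1 fs0 fs1 coFb le_m gcd1 u_gt0 u_periodic h_u a.
have fF : digitmap b fs b.-1 = fs b.-1 by apply: digitmap_digit => //; lia.
have fM : digitmap b fs mstar = fs mstar by apply: digitmap_digit => //; lia.
rewrite fF fM in gcd1; rewrite fF.
set f := digitmap b fs in u_periodic h_u *.
have fh_gt0 : 0 < f h.
  have [_ [[|r] [// _]]] := h_u.
  rewrite iterSr; case: (f h) => // /esym u_eq.
  by rewrite iter_fix // in u_eq; rewrite u_eq in u_gt0.
pose e := fs b.-1 * fs mstar.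
pose T := f h * b ^ e.
have le_eT : e <= T by rewrite (leq_trans (ltnW (ltn_expl e b_gt1))) ?leq_pmull.
have lt_mb : mstar < b by lia.
have [l [flT l_mod]] :=
  @digitmap_preimage_mod b fs mstar _ T a b_gt1 fs0 fs1 lt_mb coFb gcd1 le_eT.
have fT : f T = f (f h) by rewrite /T mulnC /f digitmap_mulXn.
have T_gt0 : 0 < T by rewrite muln_gt0 fh_gt0 expn_gt0 ltnW.
have l_gt0 : 0 < l by case: l flT {l_mod} => // flT; rewrite -flT in T_gt0.
have ffl : f (f l) = f (f h) by rewrite /f flT; exact: fT.
have [l_u conc] := @concurrently_u_iter2 f u l h l_gt0 ffl u_periodic h_u.
by exists l.
Qed.
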